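(* Let $B$ be a finite one-generator skew brace, $x\in B$ with $B=B(x)$, and $C:=\langle x\rangle$ (the sub-q-cycle set of $B$ generated by $x$). Then the subgroup of $(B,\circ)$ generated by $C$ is $B$.
   Context: A skew brace is a triple $(B,+,\circ)$ where $(B,+)$ and $(B,\circ)$ are groups and $a\circ(b+c)=a\circ b-a+a\circ c$; $a^-$ is the inverse in $(B,\circ)$, $\lambda_a(b):=-a+a\circ b$, $\delta_a(b):=a\circ b-a$. $B(x)$ is the smallest subset containing $x$ that is a subgroup of both $(B,+)$ and $(B,\circ)$. $B$ is a q-cycle set via $a\cdot b:=\lambda_{a^-}(b)$, $a:b:=\delta_{a^-}(b)$, where a q-cycle set is a non-empty set with operations $\cdot,:$ such that each $y\mapsto x\cdot y$ is bijective and $(x\cdot y)\cdot(x\cdot z)=(y:x)\cdot(y\cdot z)$, $(x:y):(x:z)=(y\cdot x):(y:z)$, $(x\cdot y):(x\cdot z)=(y:x)\cdot(y:z)$. A sub-q-cycle set is a subset that is a q-cycle set under the restricted operations, and $\langle x\rangle$ is the smallest one containing $x$. *)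

From mathcomp Require Import all_boot.
Set Implicit Arguments. Unset Strict Implicit. Unset Printing Implicit Defensive.

Record skew_brace (T : finType) := SkewBrace {
  add : T -> T -> T;
  neg : T -> T;
  zero : T;
  comp : T -> T -> T;
  cinv : T -> T;
  one : T;
  addA : forall a b c, add a (add b c) = add (add a b) c;
  add0x : forall a, add zero a = a;
  addx0 : forall a, add a zero = a;
  addNx : forall a, add (neg a) a = zero;
  addxN : forall a, add a (neg a) = zero;
  compA : forall a b c, comp a (comp b c) = comp (comp a b) c;
  comp1x : forall a, comp one a = a;
  compx1 : forall a, comp a one = a;
  compVx : forall a, comp (cinv a) a = one;
  compxV : forall a, comp a (cinv a) = one;
  brace_compat : forall a b c,
    comp a (add b c) = add (add (comp a b) (neg a)) (comp a c)
}.

Section Defs.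
Variables (T : finType) (B : skew_brace T).

Local Notation "a + b" := (add B a b).
Local Notation "- a" := (neg B a).
Local Notation "a 'o' b" := (comp B a b) (at level 40, left associativity).

Definition lambda (a b : T) : T := - a + (a o b).
Definition delta (a b : T) : T := (a o b) + - a.

Definition qdot (a b : T) : T := lambda (cinv B a) b.
Definition qcol (a b : T) : T := delta (cinv B a) b.

Definition is_add_subgroup (S : {set T}) : Prop :=
  zero B \in S /\ (forall a b, a \in S -> b \in S -> a + b \in S) /\
  (forall a, a \in S -> - a \in S).

Definition is_comp_subgroup (S : {set T}) : Prop :=
  one B \in S /\ (forall a b, a \in S -> b \in S -> a o b \in S) /\
  (forall a, a \in S -> cinv B a \in S).

Definition in_brace_gen (x y : T) : Prop :=
  forall S : {set T}, x \in S -> is_add_subgroup S -> is_comp_subgroup S ->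
    y \in S.

Definition is_sub_qcycle_set (S : {set T}) : Prop :=
  (exists a, a \in S) /\
  (forall a b, a \in S -> b \in S -> qdot a b \in S) /\
  (forall a b, a \in S -> b \in S -> qcol a b \in S) /\
  (forall a, a \in S ->
     (forall y1 y2, y1 \in S -> y2 \in S -> qdot a y1 = qdot a y2 -> y1 = y2) /\
     (forall z, z \in S -> exists2 y, y \in S & qdot a y = z)) /\
  (forall a b c, a \in S -> b \in S -> c \in S ->
     [/\ qdot (qdot a b) (qdot a c) = qdot (qcol b a) (qdot b c),
         qcol (qcol a b) (qcol a c) = qcol (qdot b a) (qcol b c) &
         qcol (qdot a b) (qdot a c) = qdot (qcol b a) (qcol b c)]).

Definition in_qcycle_gen (x y : T) : Prop :=
  forall S : {set T}, x \in S -> is_sub_qcycle_set S -> y \in S.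

Definition in_comp_subgroup_gen (P : T -> Prop) (y : T) : Prop :=
  forall H : {set T}, is_comp_subgroup H -> (forall c, P c -> c \in H) ->
    y \in H.

End Defs.

From mathcomp Require Import all_boot boolp.
From Pilot Require Import Defs.
Set Implicit Arguments. Unset Strict Implicit. Unset Printing Implicit Defensive.

(* Let G be the subgroup of (B, o) generated by C = <x>.  Since C is closed under
   a . b = lambda_{a^-}(b) and lambda_{a^-} is injective, finiteness gives
   lambda_a(C) = C for a in C; the set of g with lambda_g(C) included in C is a
   subgroup of (B, o), so lambda_g(C) is included in C for all g in G.  A subgroup
   of (B, o) generated by a set S with lambda_G(S) included in G is invariant
   under lambda_G, and is then also closed under a + b = a o lambda_{a^-}(b), so
   G is a sub skew brace containing x, whence G = B. *)

Lemma inj_imset_eq (T : finType) (f : T -> T) (S : {set T}) :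
  injective f -> f @: S \subset S -> f @: S = S.
Proof. by move=> f_inj fS; apply/eqP; rewrite eqEcard fS (card_imset _ f_inj) /=. Qed.

Section SkewBraceTheory.
Variables (T : finType) (B : skew_brace T).

Local Notation "a + b" := (add B a b).
Local Notation "- a" := (neg B a).
Local Notation "a 'o' b" := (comp B a b) (at level 40, left associativity).
Local Notation "1" := (one B).
Local Notation "0" := (zero B).
Local Notation lambda := (lambda B).

Lemma addrI a : injective (add B a).
Proof.
by move=> b c eq_ab; rewrite -[b](add0x B) -(addNx B a) -addA eq_ab addA addNx add0x.
Qed.

Lemma comprI a : injective (comp B a).
Proof.
by move=> b c eq_ab; rewrite -[b](comp1x B) -(compVx B a) -compA eq_ab compA compVx comp1x.
Qed.

Lemma compx0 a : a o 0 = a.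
Proof.
have := brace_compat B a 0 0; rewrite add0x -{1}[a o 0](addx0 B) -addA => /addrI eq0.
by rewrite -[a o 0](add0x B) -{1}(addxN B a) -addA -eq0 addx0.
Qed.

Lemma zero_one : 0 = 1.
Proof. by rewrite -[0](comp1x B) compx0. Qed.

Lemma neg0 : - 0 = 0.
Proof. by rewrite -[- 0](add0x B) addxN. Qed.

Lemma compxN a b : a o (- b) = a + - (a o b) + a.
Proof.
have := brace_compat B a b (- b); rewrite addxN compx0 => eq_a.
apply: (@addrI (a o b + - a)); rewrite -eq_a !addA.
by rewrite -(addA B _ (- a) a) addNx addx0 addxN add0x.
Qed.

Lemma lambda_inj a : injective (lambda a).
Proof. by move=> b c /addrI /comprI. Qed.

Lemma lambda1 : lambda 1 =1 id.
Proof. by move=> b; rewrite /Defs.lambda comp1x -zero_one neg0 add0x. Qed.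

Lemma lambdax1 a : lambda a 1 = 1.
Proof. by rewrite /Defs.lambda -zero_one compx0 addNx. Qed.

Lemma lambdaM a b c : lambda (a o b) c = lambda a (lambda b c).
Proof.
rewrite /Defs.lambda brace_compat compxN compA.
by rewrite !addA addNx add0x -(addA B _ a) addxN addx0.
Qed.

Lemma lambdaD a u v : lambda a (u + v) = lambda a u + lambda a v.
Proof. by rewrite /Defs.lambda brace_compat !addA. Qed.

Lemma comp_lambda a b : a o b = a + lambda a b.
Proof. by rewrite /Defs.lambda addA addxN add0x. Qed.

Lemma add_lambda a b : a + b = a o lambda (cinv B a) b.
Proof. by rewrite comp_lambda -lambdaM compxV lambda1. Qed.

Lemma imset_lambda1 (X : {set T}) : lambda 1 @: X = X.
Proof. by rewrite (eq_imset _ lambda1) imset_id. Qed.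

Lemma imset_lambdaM a b (X : {set T}) :
  lambda (a o b) @: X = lambda a @: (lambda b @: X).
Proof. by rewrite -imset_comp; apply: eq_imset => c; exact: lambdaM. Qed.

Lemma comp_subgroup_of_closed (S : {set T}) :
  1 \in S -> (forall a b, a \in S -> b \in S -> a o b \in S) ->
  is_comp_subgroup B S.
Proof.
move=> S1 SM; split=> //; split=> // a aS.
have aSS : comp B a @: S = S.
  apply: inj_imset_eq; first exact: comprI.
  by apply/subsetP=> _ /imsetP[b bS ->]; exact: SM.
have /imsetP[b bS] : 1 \in comp B a @: S by rewrite aSS.
by rewrite -(compxV B a) => /comprI ->.
Qed.

Lemma add_subgroup_of_closed (S : {set T}) :
  0 \in S -> (forall a b, a \in S -> b \in S -> a + b \in S) ->
  is_add_subgroup B S.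
Proof.
move=> S0 SD; split=> //; split=> // a aS.
have aSS : add B a @: S = S.
  apply: inj_imset_eq; first exact: addrI.
  by apply/subsetP=> _ /imsetP[b bS ->]; exact: SD.
have /imsetP[b bS] : 0 \in add B a @: S by rewrite aSS.
by rewrite -(addxN B a) => /addrI ->.
Qed.

Lemma lambda_imset_eq (X : {set T}) :
  (forall a b, a \in X -> b \in X -> qdot B a b \in X) ->
  forall a, a \in X -> lambda a @: X = X.
Proof.
move=> X_qdot a aX.
have inv_aX : lambda (cinv B a) @: X = X.
  apply: inj_imset_eq; first exact: lambda_inj.
  by apply/subsetP=> _ /imsetP[b bX ->]; exact: X_qdot.
by rewrite -{1}inv_aX -imset_lambdaM compxV imset_lambda1.
Qed.

Definition lambda_stab (X : {set T}) : {set T} := [set g | lambda g @: X \subset X].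

Lemma lambda_stab_subgroup (X : {set T}) : is_comp_subgroup B (lambda_stab X).
Proof.
apply: comp_subgroup_of_closed; first by rewrite inE imset_lambda1.
move=> a b; rewrite !inE imset_lambdaM => aX bX.
exact: subset_trans (imsetS _ bX) aX.
Qed.

Section GeneratedSubgroup.
Variables (S G : {set T}).
Hypothesis G_subgroup : is_comp_subgroup B G.
Hypothesis SG : S \subset G.
Hypothesis G_min : forall H, is_comp_subgroup B H -> S \subset H -> G \subset H.
Hypothesis lambda_GS : forall g s, g \in G -> s \in S -> lambda g s \in G.

Lemma lambda_closed_generated g k : g \in G -> k \in G -> lambda g k \in G.
Proof.
have [G1 [GM GV]] := G_subgroup.
pose L := [set u in G | [forall g' in G, lambda g' u \in G]].
have inL k' : reflect (k' \in G /\ forall g, g \in G -> lambda g k' \in G) (k' \in L).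
  by rewrite inE; apply: (iffP andP) => -[-> /forall_inP]; split.
have GL : G \subset L.
  apply: G_min; last first.
    apply/subsetP=> s sS; apply/inL; split; first exact: (subsetP SG).
    by move=> g' /lambda_GS; apply.
  apply: comp_subgroup_of_closed; first by apply/inL; split=> // g' _; rewrite lambdax1.
  move=> u v /inL[uG lambda_u] /inL[vG lambda_v]; apply/inL; split; first exact: (GM).
  (* lambda_g(u o v) = lambda_g u o lambda_{(lambda_g u)^- o g o u}(v) *)
  move=> g' g'G; have wG := lambda_u g' g'G; set w := lambda g' u in wG *.
  rewrite comp_lambda lambdaD add_lambda -!lambdaM.
  exact: GM _ _ wG (lambda_v _ (GM _ _ (GM _ _ (GV _ wG) g'G) uG)).
by move=> gG /(subsetP GL) /inL[_]; apply.
Qed.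

Lemma add_subgroup_generated : is_add_subgroup B G.
Proof.
have [G1 [GM GV]] := G_subgroup.
apply: add_subgroup_of_closed; first by rewrite zero_one.
move=> a b aG bG; rewrite add_lambda.
exact: GM _ _ aG (lambda_closed_generated (GV _ aG) bG).
Qed.

End GeneratedSubgroup.

Definition comp_span (P : T -> Prop) : {set T} :=
  [set y | `[< in_comp_subgroup_gen B P y >]].

Definition qcycle_span (x : T) : {set T} := [set y | `[< in_qcycle_gen B x y >]].

Lemma comp_spanP (P : T -> Prop) y :
  reflect (in_comp_subgroup_gen B P y) (y \in comp_span P).
Proof. by rewrite inE; apply: asboolP. Qed.

Lemma qcycle_spanP x y : reflect (in_qcycle_gen B x y) (y \in qcycle_span x).
Proof. by rewrite inE; apply: asboolP. Qed.

Lemma comp_span_subgroup (P : T -> Prop) : is_comp_subgroup B (comp_span P).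
Proof.
split; [|split].
- by apply/comp_spanP=> H [].
- move=> a b /comp_spanP aH /comp_spanP bH; apply/comp_spanP=> H H_sub PH.
  by have [_ [HM _]] := H_sub; exact: HM _ _ (aH H H_sub PH) (bH H H_sub PH).
- move=> a /comp_spanP aH; apply/comp_spanP=> H H_sub PH.
  by have [_ [_ HV]] := H_sub; exact: HV _ (aH H H_sub PH).
Qed.

Lemma mem_comp_span (P : T -> Prop) c : P c -> c \in comp_span P.
Proof. by move=> Pc; apply/comp_spanP=> H _; apply. Qed.

Lemma comp_span_min (P : T -> Prop) (H : {set T}) :
  is_comp_subgroup B H -> (forall c, P c -> c \in H) -> comp_span P \subset H.
Proof. by move=> H_sub PH; apply/subsetP=> y /comp_spanP; apply. Qed.

Lemma qcycle_span_id x : x \in qcycle_span x.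
Proof. by apply/qcycle_spanP. Qed.

Lemma qcycle_span_qdot x a b :
  a \in qcycle_span x -> b \in qcycle_span x -> qdot B a b \in qcycle_span x.
Proof.
move=> /qcycle_spanP aC /qcycle_spanP bC; apply/qcycle_spanP=> S xS S_qcycle.
have [_ [S_qdot _]] := S_qcycle.
exact: S_qdot _ _ (aC S xS S_qcycle) (bC S xS S_qcycle).
Qed.

End SkewBraceTheory.

Theorem mainTheorem20 (T : finType) (B : skew_brace T) (x : T) :
  (forall y : T, in_brace_gen B x y) ->
  forall y : T, in_comp_subgroup_gen B (in_qcycle_gen B x) y.
Proof.
move=> B_gen y.
set C := qcycle_span B x; set G := comp_span B (in_qcycle_gen B x).
have G_subgroup : is_comp_subgroup B G := comp_span_subgroup B _.
have CG : C \subset G by apply/subsetP=> c /qcycle_spanP; exact: mem_comp_span.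
have G_min H : is_comp_subgroup B H -> C \subset H -> G \subset H.
  by move=> H_sub /subsetP CH; apply: comp_span_min => // c /qcycle_spanP; exact: CH.
have G_stab : G \subset lambda_stab B C.
  apply: G_min (lambda_stab_subgroup B C) _; apply/subsetP=> a aC.
  by rewrite inE (lambda_imset_eq (@qcycle_span_qdot _ B x) aC).
have lambda_GC g c : g \in G -> c \in C -> lambda B g c \in G.
  move=> /(subsetP G_stab); rewrite inE => /subsetP gC cC.
  by apply: (subsetP CG); apply: gC; exact: imset_f.
have G_add := add_subgroup_generated G_subgroup CG G_min lambda_GC.
have xG : x \in G := subsetP CG _ (qcycle_span_id B x).
exact/comp_spanP/(B_gen y G xG G_add G_subgroup).
Qed.
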